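(* Let $G$ be a checkerboard-colored graph cellularly embedded on the torus, with faces colored red and blue. Let $k_r$ and $k_b$ be the total number of red faces and of blue faces respectively. Suppose each vertex of $G$ is incident to an odd number of red faces and an odd number of blue faces. If $G$ contains an A-trail, then $k_r$ is odd or $k_b$ is odd.
   Context: A checkerboard coloring of an embedded graph is a proper 2-coloring (red/blue) of its faces, i.e. faces sharing an edge receive different colors. A transition at a vertex is a partition of its half-edges into pairs; it is smooth if it only pairs half-edges adjacent in the cyclic rotation at the vertex. An A-trail is an Eulerian circuit all of whose induced transitions (pairing consecutively traversed half-edges) are smooth. *)

(* Cellularly embedded graphs on the torus are encoded as
   combinatorial maps (rotation systems): darts = half-edges. *)
From mathcomp Require Import all_boot fingroup perm.

Set Implicit Arguments.
Unset Strict Implicit.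
Unset Printing Implicit Defensive.

Section Maps.
Variable D : finType.

(* alpha : edge involution (pairs the two half-edges of an edge);
   sigma : rotation at vertices (vertices = sigma-orbits);
   faces = orbits of phi d := sigma (alpha d). *)
Definition face_perm (alpha sigma : {perm D}) : {perm D} := (alpha * sigma)%g.

Definition vertices (sigma : {perm D}) := porbits sigma.
Definition edges (alpha : {perm D}) := porbits alpha.
Definition faces (alpha sigma : {perm D}) := porbits (face_perm alpha sigma).

(* A connected combinatorial map with Euler characteristic V - E + F = 0,
   i.e. a graph cellularly embedded on the torus. *)
Definition torus_map (alpha sigma : {perm D}) : Prop :=
  [/\ 0 < #|D|,
      (forall d, alpha (alpha d) = d),
      (forall d, alpha d != d),
      (forall x y, connect [rel a b | (b == alpha a) || (b == sigma a)] x y)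
    & #|vertices sigma| + #|faces alpha sigma| = #|edges alpha|].

(* col d = true means the face containing dart d is red, false means blue. *)
Definition checkerboard (alpha sigma : {perm D}) (col : D -> bool) : Prop :=
  (forall d, col (face_perm alpha sigma d) = col d) /\
  (forall d, col (alpha d) != col d).

Definition red_faces alpha sigma (col : D -> bool) : {set {set D}} :=
  [set f in faces alpha sigma | [exists d in f, col d]].
Definition blue_faces alpha sigma (col : D -> bool) : {set {set D}} :=
  [set f in faces alpha sigma | [exists d in f, ~~ col d]].

(* Face incidences at a vertex v, counted by corners: the corner at dart d
   lies in the face containing d. *)
Definition red_at (v : {set D}) (col : D -> bool) := #|[set d in v | col d]|.
Definition blue_at (v : {set D}) (col : D -> bool) := #|[set d in v | ~~ col d]|.

(* An Eulerian circuit is a cyclic sequence w = [d_1; ...; d_m] of darts,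
   d_i being the half-edge along which the i-th edge is left; every edge is
   traversed exactly once, and the arrival half-edge alpha d_i is at the
   same vertex as the next departure half-edge d_{i+1} (cyclically). *)
Definition eulerian_circuit (alpha sigma : {perm D}) (w : seq D) : Prop :=
  [/\ uniq (w ++ map alpha w),
      (forall d, d \in w ++ map alpha w)
    & path.cycle [rel x y | y \in porbit sigma (alpha x)] w].

(* The induced transition pairs alpha d_i with d_{i+1}; it is smooth when
   these two half-edges are adjacent in the rotation at the vertex. *)
Definition smooth_pair (sigma : {perm D}) (a b : D) : bool :=
  (b == sigma a) || (a == sigma b).

Definition A_trail (alpha sigma : {perm D}) (w : seq D) : Prop :=
  eulerian_circuit alpha sigma w /\
  path.cycle [rel x y | smooth_pair sigma (alpha x) y] w.

End Maps.

(* All darts d_1, ..., d_m leaving along an A-trail have the same colour, say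
   red, and they are exactly the red darts.  Let N be the cyclic permutation
   d_i |-> d_(i+1) and P the face permutation restricted to the red darts, so
   that the cycles of P on red darts are the red faces.  Smoothness says that at
   each red dart N^-1 P is either the identity or sigma^2, so every cycle of
   N^-1 P is a point or the set of red corners at a vertex, which has odd size.
   Hence N^-1 P is even, N and P have the same number of cycles modulo 2, and N
   has a single cycle. *)
From mathcomp Require Import all_boot fingroup perm morphism action.

Set Implicit Arguments.
Unset Strict Implicit.
Unset Printing Implicit Defensive.

Local Open Scope group_scope.

Section PermOrbits.
Variable T : finType.
Implicit Types (s p q t : {perm T}) (A : {set T}).

Lemma porbit_fixed s x : s x = x -> porbit s x = [set x].
Proof.
move=> sx; apply/setP=> y; rewrite inE.
by apply/porbitP/eqP => [[i ->]|->]; [rewrite permX_fix | exists 0; rewrite expg0 perm1].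
Qed.

Lemma mem_porbit_fconnect s x y : fconnect s x y -> y \in porbit s x.
Proof. by move/iter_findex <-; rewrite -permX mem_porbit. Qed.

Lemma sum_card_porbits s : \sum_(O in porbits s) #|O| = #|T|.
Proof.
rewrite -cardsT -(acts_sum_card_orbit (_ : [acts <[s]>, on [set: T] | 'P])).
  rewrite /porbits porbitE; apply: eq_bigl => O.
  by apply/imsetP/imsetP => -[x _ ->]; exists x.
by apply/subsetP => a _; apply/astabsP => x; rewrite !inE.
Qed.

Lemma odd_perm_odd_porbits s : (forall x, odd #|porbit s x|) -> odd_perm s = false.
Proof.
move=> odd_s; rewrite /odd_perm -(sum_card_porbits s) -sum1_card.
suff -> : odd (\sum_(O in porbits s) #|O|) = odd (\sum_(O in porbits s) 1).
  exact: addbb.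
apply: (big_rec2 (fun a b => odd a = odd b)) => // _ a b /imsetP[x _ ->] ab.
by rewrite !oddD ab odd_s.
Qed.

Lemma card_porbits_on s A :
  perm_on A s -> #|porbits s| = #|porbit s @: A| + #|~: A|.
Proof.
move=> sA; have fixA x : x \in ~: A -> porbit s x = [set x].
  by rewrite inE => xA; apply: porbit_fixed; apply: out_perm xA.
have -> : porbits s = porbit s @: A :|: porbit s @: ~: A.
  by rewrite -imsetU setUCr; apply/setP => O; apply/imsetP/imsetP => -[x _ ->]; exists x.
rewrite cardsU (eq_in_imset fixA) (card_imset _ set1_inj).
suff -> : porbit s @: A :&: set1 @: (~: A) = set0 by rewrite cards0 subn0.
apply/setP => O; rewrite !inE; apply/andP => -[/imsetP[x xA ->] /imsetP[y yA]].
by move/setP/(_ x); rewrite porbit_id inE => /esym/eqP xy; rewrite -xy inE xA in yA.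
Qed.

Lemma odd_porbits_on p q A : perm_on A p -> perm_on A q ->
  odd_perm (p^-1 * q) = false -> odd #|porbit p @: A| = odd #|porbit q @: A|.
Proof.
move=> pA qA even_pq; have := congr1 (@odd_perm T) (mulKVg p q).
rewrite odd_permM even_pq addbF /odd_perm (card_porbits_on pA) (card_porbits_on qA).
by rewrite !oddD => /addbI/addIb.
Qed.

Lemma porbit_partial q t x : (forall z, q z = z \/ q z = t z) ->
  q x != x -> porbit q x = porbit t x.
Proof.
move=> qt qx; have tx : q x = t x by case: (qt x) => // qx_x; rewrite qx_x eqxx in qx.
have moved i : q ((t ^+ i) x) = t ((t ^+ i) x) /\ t ((t ^+ i) x) != (t ^+ i) x.
  elim: i => [|i [qz tz]]; first by rewrite expg0 perm1 -tx.
  rewrite expgSr permM; set z := (t ^+ i) x in qz tz *.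
  have tz' : t (t z) != t z by apply: contra tz => /eqP/perm_inj ->.
  case: (qt (t z)) => [qtz | ->]; last by split.
  have /perm_inj tzz : q (t z) = q z by rewrite qtz qz.
  by rewrite tzz eqxx in tz.
have qtX i : (q ^+ i) x = (t ^+ i) x.
  by elim: i => [|i IH]; rewrite ?expg0 ?perm1 // !expgSr !permM IH (moved i).1.
by apply/setP => y; apply/porbitP/porbitP => -[i ->]; exists i; rewrite qtX.
Qed.

Lemma porbit_restr_perm A p x : p \in 'N(A | 'P) -> x \in A ->
  porbit (restr_perm A p) x = porbit p x.
Proof.
move=> nAp Ax; apply/setP => y; apply/porbitP/porbitP => -[i ->]; exists i;
  by rewrite -morphX // restr_permE ?groupX.
Qed.

End PermOrbits.

Section CyclePerm.
Variables (T : finType) (w : seq T).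
Hypothesis Uw : uniq w.

Definition cycle_perm : {perm T} := perm (can_inj (prev_next Uw)).

Lemma cycle_permE x : cycle_perm x = next w x.
Proof. by rewrite permE. Qed.

Lemma cycle_perm_on : perm_on [set x in w] cycle_perm.
Proof.
apply/subsetP => x; rewrite !inE cycle_permE; apply: contraR => xw.
by rewrite next_nth (negbTE xw).
Qed.

Lemma porbits_cycle_perm x : x \in w ->
  porbit cycle_perm @: [set y in w] = [set porbit cycle_perm x].
Proof.
move=> wx; apply/setP => O; rewrite inE; apply/imsetP/eqP => [[y] | ->].
  rewrite inE => wy ->.
  apply/eqP; rewrite eq_porbit_mem; apply: mem_porbit_fconnect.
  by rewrite (eq_fconnect cycle_permE) (fconnect_cycle (cycle_next Uw) wx).
by exists x; rewrite ?inE.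
Qed.

End CyclePerm.

Section Checkerboard.
Variables (D : finType) (alpha sigma : {perm D}) (col : D -> bool).
Hypothesis alphaK : forall d, alpha (alpha d) = d.
Hypothesis cb : checkerboard alpha sigma col.

Lemma face_permE d : face_perm alpha sigma d = sigma (alpha d).
Proof. exact: permM. Qed.

Lemma col_alpha d : col (alpha d) = ~~ col d.
Proof. by have := cb.2 d; case: (col (alpha d)); case: (col d). Qed.

Lemma col_sigma d : col (sigma d) = ~~ col d.
Proof. by have := cb.1 (alpha d); rewrite face_permE alphaK col_alpha => ->. Qed.

Lemma col_sigmaX k d : col ((sigma ^+ k) d) = odd k (+) col d.
Proof.
elim: k => [|k IH]; first by rewrite expg0 perm1.
by rewrite expgSr permM col_sigma IH negb_add.
Qed.

Lemma porbit_sigma2 d : col d ->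
  porbit (sigma ^+ 2) d = [set e in porbit sigma d | col e].
Proof.
move=> red_d; apply/setP => e; rewrite inE.
apply/porbitP/andP => [[i ->] | [/porbitP[k ->]]].
  by rewrite -expgM mem_porbit col_sigmaX oddM.
rewrite col_sigmaX red_d addbT => k_even.
by exists k./2; rewrite -expgM mul2n halfK (negbTE k_even) subn0.
Qed.

Lemma checkerboard_negb : checkerboard alpha sigma (fun d => ~~ col d).
Proof. by split => d; rewrite ?cb.1 // col_alpha; case: (col d). Qed.

Lemma mem_A_trail w x0 : A_trail alpha sigma w -> x0 \in w ->
  forall d, (d \in w) = (col d == col x0).
Proof.
move=> [[Uww cover _] smooth] wx0.
have Uw : uniq w by move: Uww; rewrite cat_uniq => /andP[].
have col_next : invariant (next w) col =1 xpredT.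
  move=> x /=; apply/eqP; have [wx | nwx] := boolP (x \in w); last first.
    by rewrite next_nth (negbTE nwx).
  case/orP: (next_cycle smooth wx) => /eqP turn.
    by rewrite turn col_sigma col_alpha negbK.
  by apply: negb_inj; rewrite -col_sigma -turn col_alpha.
have col_w x : x \in w -> col x = col x0.
  move=> wx; apply/esym/(fconnect_invariant col_next).
  by rewrite (fconnect_cycle (cycle_next Uw) wx0).
move=> d; apply/idP/eqP => [/col_w // | col_d].
have := cover d; rewrite mem_cat => /orP[// | /mapP[y wy dy]].
by move: col_d; rewrite dy col_alpha (col_w y wy); case: (col x0).
Qed.

End Checkerboard.

Lemma red_facesE (D : finType) (alpha sigma : {perm D}) (col : D -> bool) :
  red_faces alpha sigma col = porbit (face_perm alpha sigma) @: [set d | col d].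
Proof.
apply/setP => O; rewrite inE; apply/andP/imsetP.
  case=> /imsetP[d _ ->] /existsP[e /andP[de red_e]].
  by exists e; rewrite ?inE //; apply/esym/eqP; rewrite eq_porbit_mem.
case=> d; rewrite inE => red_d ->; split; first exact: imset_f.
by apply/existsP; exists d; rewrite porbit_id.
Qed.

Section RedTrail.
Variables (D : finType) (alpha sigma : {perm D}) (col : D -> bool) (w : seq D).
Hypothesis alphaK : forall d, alpha (alpha d) = d.
Hypothesis cb : checkerboard alpha sigma col.
Hypothesis red_odd : forall v, v \in vertices sigma -> odd (red_at v col).
Hypothesis Uw : uniq w.
Hypothesis w_red : forall d, (d \in w) = col d.
Hypothesis w_smooth : path.cycle [rel x y | smooth_pair sigma (alpha x) y] w.

Let phi := face_perm alpha sigma.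
Let R := [set d | col d].
Let P := restr_perm R phi.
Let N := cycle_perm Uw.

Lemma face_perm_astabs : phi \in 'N(R | 'P).
Proof. by apply/astabsP => d; rewrite !inE /= cb.1. Qed.

Lemma trail_perm_on : perm_on R N.
Proof.
by have := cycle_perm_on Uw; congr perm_on; apply/setP => d; rewrite !inE w_red.
Qed.

Lemma trail_turn z : (N^-1 * P) z = z \/ col z /\ (N^-1 * P) z = (sigma ^+ 2) z.
Proof.
have [x ->] : exists x, z = N x by exists (N^-1 z); rewrite permKV.
rewrite permM permK.
have [Rx | nRx] := boolP (x \in R); last first.
  by left; rewrite (out_perm trail_perm_on nRx) (out_perm (restr_perm_on R phi) nRx).
have wx : x \in w by rewrite w_red -(in_set col).
rewrite restr_permE ?face_perm_astabs // face_permE cycle_permE.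
case/orP: (next_cycle w_smooth wx) => /eqP smooth; first by left.
right; split; first by rewrite -w_red mem_next.
by rewrite smooth expgS expg1 permM.
Qed.

Lemma odd_porbit_turn z : odd #|porbit (N^-1 * P) z|.
Proof.
have [fixed | moved] := eqVneq ((N^-1 * P) z) z.
  by rewrite porbit_fixed ?cards1.
have [/eqP | [red_z _]] := trail_turn z; first by rewrite (negbTE moved).
rewrite (porbit_partial (t := sigma ^+ 2) _ moved); last first.
  by move=> y; case: (trail_turn y) => [|[_]]; [left | right].
rewrite (porbit_sigma2 alphaK cb red_z).
exact: red_odd (imset_f _ _).
Qed.

Lemma odd_red_faces_of_trail x0 : x0 \in w -> odd #|red_faces alpha sigma col|.
Proof.
move=> wx0; have wR : [set d in w] = R by apply/setP => d; rewrite !inE w_red.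
have facesP : porbit P @: R = porbit phi @: R.
  by apply: eq_in_imset => x; apply: porbit_restr_perm face_perm_astabs.
rewrite red_facesE -facesP -(odd_porbits_on trail_perm_on (restr_perm_on R phi)).
  by rewrite -wR (porbits_cycle_perm Uw wx0) cards1.
exact: odd_perm_odd_porbits odd_porbit_turn.
Qed.

End RedTrail.

Theorem mainTheorem5 (D : finType) (alpha sigma : {perm D}) (col : D -> bool) :
  torus_map alpha sigma ->
  checkerboard alpha sigma col ->
  (forall v, v \in vertices sigma -> odd (red_at v col) && odd (blue_at v col)) ->
  (exists w : seq D, A_trail alpha sigma w) ->
  odd #|red_faces alpha sigma col| || odd #|blue_faces alpha sigma col|.
Proof.
move=> [D_gt0 alphaK _ _ _] cb vert_odd [w trail].
have [[Uww cover _] smooth] := trail.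
have Uw : uniq w by move: Uww; rewrite cat_uniq => /andP[].
have [x0 wx0] : exists x0, x0 \in w.
  have [d _] := card_gt0P D_gt0; have := cover d.
  by rewrite mem_cat => /orP[wd | /mapP[y wy _]]; [exists d | exists y].
have w_col := mem_A_trail alphaK cb trail wx0.
case red_x0: (col x0) in w_col; apply/orP; [left | right].
  apply: (odd_red_faces_of_trail alphaK cb _ Uw _ smooth wx0).
    by move=> v /vert_odd/andP[].
  by move=> d; rewrite w_col eqb_id.
apply: (odd_red_faces_of_trail alphaK (checkerboard_negb cb) _ Uw _ smooth wx0).
  by move=> v /vert_odd/andP[].
by move=> d; rewrite w_col eqbF_neg.
Qed.
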